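(* For all sufficiently large $R$ the following holds. Let $V\subset\mathcal D_R$ be finite, $G_V$ the graph on $V$ in which distinct points are adjacent iff their hyperbolic distance is at most $R$, and let $N(T)$ and $D_{i,j}$ be computed from $V$. For every admissible $(i,j)$, the subgraph of $G_V$ induced by the points of $V$ lying in tiles below $T_{i,j}$ (including $T_{i,j}$) can be covered by at most $D_{i,j}+1$ vertex-disjoint cycles and isolated vertices. Moreover, if $i>0$ and $D_{i,j}=0$, then this subgraph can be covered by exactly one cycle, and this cycle has at least one edge with both endpoints in $T_{i,j}$.
   Context: $\mathcal D_R$ is the hyperbolic disk (curvature $-1$) of radius $R$ around the origin, with polar coordinates $(r,\theta)$, $r\in[0,R)$, $\theta\in(0,2\pi]$. Tiling: $i_{\max}=\lceil 0.9R/(2\ln 2)\rceil$, $n_i=2^{4-i+\lfloor R/(2\ln 2)\rfloor}$ for integers $0\le i\le i_{\max}$; $(i,j)$ is admissible if $0\le i\le i_{\max}$, $0\le j<n_i$; $T_{i,j}=\{(r,\theta)\in\mathcal D_R:\ R-2(i+1)\ln 2\le r<R-2i\ln 2,\ 2\pi j/n_i<\theta\le 2\pi(j+1)/n_i\}$. A tile $T_{i',j'}$ is below $T_{i,j}$ if $i'\le i$ and $T_{i',j'}$ is contained in the sector $\{(r,\theta): 2\pi j/n_i<\theta\le 2\pi(j+1)/n_i\}$. For a point set $V$, $N(T_{i,j})=|V\cap T_{i,j}|$. Demands: $D_{0,j}=N(T_{0,j})$ if $N(T_{0,j})\in\{1,2\}$ and $D_{0,j}=0$ otherwise; for $0<i\le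 i_{\max}$, $D_{i,j}=\max\{D_{i-1,2j}+D_{i-1,2j+1}+3-N(T_{i,j}),0\}$. A graph $H$ is covered by $k$ vertex-disjoint cycles and isolated vertices if its vertex set can be partitioned into $k$ parts, each either a single vertex or the vertex set of a cycle (of length at least $3$) in $H$. *)

From Stdlib Require Import Reals Lra Lia ZArith Arith List Permutation.
Import ListNotations.
Open Scope R_scope.

(* A point of the hyperbolic plane in polar coordinates (r, theta). *)
Definition pt : Type := (R * R)%type.

Definition floorR (x : R) : Z := Int_part x.
Definition ceilR (x : R) : Z := (- Int_part (- x))%Z.

(* Point of D_R with canonical polar coordinates r in [0,R), theta in (0,2pi];
   the origin is represented with theta = 2pi. *)
Definition in_disk (Rad : R) (p : pt) : Prop :=
  0 <= fst p < Rad /\ 0 < snd p <= 2 * PI /\ (fst p = 0 -> snd p = 2 * PI).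

(* Hyperbolic distance (curvature -1) in polar coordinates:
   d = arcosh (cosh r1 cosh r2 - sinh r1 sinh r2 cos(theta1 - theta2)). *)
Definition arcosh (c : R) : R := ln (c + sqrt (c * c - 1)).
Definition hdist (p q : pt) : R :=
  arcosh (cosh (fst p) * cosh (fst q)
          - sinh (fst p) * sinh (fst q) * cos (snd p - snd q)).

Definition i_max (Rad : R) : Z := ceilR (0.9 * Rad / (2 * ln 2)).
Definition n_i (Rad : R) (i : nat) : R :=
  powerRZ 2 (4 - Z.of_nat i + floorR (Rad / (2 * ln 2)))%Z.

Definition admissible (Rad : R) (i j : nat) : Prop :=
  (Z.of_nat i <= i_max Rad)%Z /\ INR j < n_i Rad i.

Definition in_sector (Rad : R) (i j : nat) (p : pt) : Prop :=
  2 * PI * INR j / n_i Rad i < snd p <= 2 * PI * (INR j + 1) / n_i Rad i.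

Definition in_tile (Rad : R) (i j : nat) (p : pt) : Prop :=
  in_disk Rad p /\
  Rad - 2 * (INR i + 1) * ln 2 <= fst p < Rad - 2 * INR i * ln 2 /\
  in_sector Rad i j p.

Definition leb (x y : R) : bool := if Rle_dec x y then true else false.
Definition ltb (x y : R) : bool := if Rlt_dec x y then true else false.
Definition eqbR (x y : R) : bool := if Req_EM_T x y then true else false.

Definition in_tile_b (Rad : R) (i j : nat) (p : pt) : bool :=
  leb 0 (fst p) && ltb (fst p) Rad && ltb 0 (snd p) && leb (snd p) (2 * PI) &&
  implb (eqbR (fst p) 0) (eqbR (snd p) (2 * PI)) &&
  leb (Rad - 2 * (INR i + 1) * ln 2) (fst p) && ltb (fst p) (Rad - 2 * INR i * ln 2) &&
  ltb (2 * PI * INR j / n_i Rad i) (snd p) &&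
  leb (snd p) (2 * PI * (INR j + 1) / n_i Rad i).

(* N(T_{i,j}) = |V ∩ T_{i,j}| (V given as a duplicate-free list) *)
Definition Ncount (Rad : R) (V : list pt) (i j : nat) : Z :=
  Z.of_nat (length (filter (in_tile_b Rad i j) V)).

Fixpoint Dem (Rad : R) (V : list pt) (i j : nat) : Z :=
  match i with
  | O => let n := Ncount Rad V 0 j in
         if orb (Z.eqb n 1) (Z.eqb n 2) then n else 0%Z
  | S i' => Z.max (Dem Rad V i' (2 * j) + Dem Rad V i' (2 * j + 1) + 3
                   - Ncount Rad V (S i') j)%Z 0%Z
  end.

Definition below (Rad : R) (i' j' i j : nat) : Prop :=
  (i' <= i)%nat /\ admissible Rad i' j' /\
  (forall q : pt, in_tile Rad i' j' q -> in_sector Rad i j q).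

Definition in_below (Rad : R) (i j : nat) (p : pt) : Prop :=
  exists i' j', below Rad i' j' i j /\ in_tile Rad i' j' p.

Definition adjG (Rad : R) (p q : pt) : Prop := p <> q /\ hdist p q <= Rad.

Definition is_cycle (adj : pt -> pt -> Prop) (c : list pt) : Prop :=
  (3 <= length c)%nat /\
  forall k, (k < length c)%nat ->
    adj (nth k c (0, 0)) (nth ((k + 1) mod length c) c (0, 0)).

Definition part_ok (adj : pt -> pt -> Prop) (c : list pt) : Prop :=
  (exists v, c = [v]) \/ is_cycle adj c.

Definition covered_by (adj : pt -> pt -> Prop) (W : list pt) (k : nat) : Prop :=
  exists parts : list (list pt),
    length parts = k /\ Permutation (concat parts) W /\ Forall (part_ok adj) parts.

Definition W_below (Rad : R) (V : list pt) (i j : nat) (W : list pt) : Prop :=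
  NoDup W /\ (forall p, In p W <-> (In p V /\ in_below Rad i j p)).

From Pilot Require Import Defs.
From Stdlib Require Import Reals ZArith Arith List Permutation.
From Stdlib Require Import Lra Lia ClassicalEpsilon.
Import ListNotations.
Open Scope R_scope.

(* Geometric input: every point of a tile T_{i,j} is within distance R of
   every point lying in a tile below T_{i,j}.  Writing the hyperbolic law of
   cosines with a = e^{r1}, b = e^{r2} shows that two points are close when
   their angular gap is at most e^{(R - r1 - r2)/2} and their radial gap is at
   most R - ln 4 ([hdist_le_of_bounds]); the sector width 2 pi / n_i and the
   admissible range of levels give exactly these bounds ([sector_close]).

   Combinatorial input: if the points H of one tile are "hubs" adjacent to
   all other points, then any cover of the remaining points by m parts
   (isolated vertices or cycles) can be turned into a cover of everything with
   [hub_count |H| m] parts, by threading up to |H| - 1 parts between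
   consecutive hubs into a single cycle ([hub_merge]); if m < |H| and |H| >= 3
   all points end up on one cycle closed by an edge between two hubs
   ([hub_merge_cycle]).

   The theorem follows by induction on the level i: the points below T_{i+1,j}
   are those of the tile and those below its two children ([below_succ_split]),
   and the demand recursion is exactly the arithmetic of [hub_count]. *)

Section HubCovers.

Variable g : pt -> pt -> Prop.
Hypothesis g_sym : forall p q, g p q -> g q p.
Let adj (p q : pt) : Prop := p <> q /\ g p q.
Local Notation d0 := ((0, 0) : pt).

Fixpoint chain (l : list pt) : Prop :=
  match l with
  | x :: ((y :: _) as t) => g x y /\ chain t
  | _ => True
  end.

Lemma chain_nth (l : list pt) :
  chain l -> forall k, (S k < length l)%nat -> g (nth k l d0) (nth (S k) l d0).
Proof.
  induction l as [|x l IH]; simpl; intros H k Hk; [lia|].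
  destruct l as [|y l]; simpl in *; [lia|].
  destruct H as [Hxy Hch]. destruct k as [|k]; [exact Hxy|].
  apply (IH Hch k). simpl. lia.
Qed.

Lemma nth_chain (l : list pt) :
  (forall k, (S k < length l)%nat -> g (nth k l d0) (nth (S k) l d0)) -> chain l.
Proof.
  induction l as [|x l IH]; simpl; intros H; [exact I|].
  destruct l as [|y l]; [exact I|]. split.
  - apply (H 0%nat). simpl; lia.
  - apply IH. intros k Hk. apply (H (S k)). simpl in *; lia.
Qed.

Lemma chain_app (l1 l2 : list pt) : chain l1 -> chain l2 ->
  (l1 = [] \/ l2 = [] \/ g (last l1 d0) (hd d0 l2)) -> chain (l1 ++ l2).
Proof.
  revert l2. induction l1 as [|x l1 IH]; simpl; intros l2 H1 H2 H3; [exact H2|].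
  destruct l1 as [|y l1].
  - destruct l2 as [|z l2]; [exact I|]. split; [|exact H2].
    destruct H3 as [H3|[H3|H3]]; [discriminate|discriminate|exact H3].
  - destruct H1 as [Hxy H1]. split; [exact Hxy|].
    apply (IH l2 H1 H2). destruct H3 as [H3|[H3|H3]]; [discriminate|auto|auto].
Qed.

Lemma chain_clique (l : list pt) : (forall x y, In x l -> In y l -> g x y) -> chain l.
Proof.
  induction l as [|x l IH]; simpl; intros H; [exact I|].
  destruct l as [|y l]; [exact I|]. split.
  - apply H; simpl; auto.
  - apply IH. intros a b Ha Hb. apply H; right; auto.
Qed.

Lemma last_nth (l : list pt) : last l d0 = nth (length l - 1) l d0.
Proof.
  induction l as [|x l IH]; [reflexivity|].
  destruct l as [|y l]; [reflexivity|].
  change (last (x :: y :: l) d0) with (last (y :: l) d0).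
  rewrite IH. simpl. replace (length l - 0)%nat with (length l) by lia. reflexivity.
Qed.

Lemma last_app_nonnil (l1 l2 : list pt) : l2 <> [] -> last (l1 ++ l2) d0 = last l2 d0.
Proof.
  induction l1 as [|x l1 IH]; intros H; [reflexivity|].
  rewrite <- (IH H). simpl.
  destruct (l1 ++ l2) eqn:E; [|reflexivity].
  apply app_eq_nil in E. destruct E; contradiction.
Qed.

Lemma last_In_nonnil (l : list pt) : l <> [] -> In (last l d0) l.
Proof.
  induction l as [|x l IH]; intros H; [contradiction|].
  destruct l as [|y l]; [left; reflexivity|].
  right. apply IH. discriminate.
Qed.

Lemma cycle_of_closed_chain (c : list pt) : NoDup c -> (3 <= length c)%nat ->
  chain (c ++ [hd d0 c]) -> is_cycle adj c.
Proof.
  intros Hnd Hl Hch. split; [exact Hl|]. intros k Hk.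
  pose proof (chain_nth _ Hch k) as Hg. rewrite length_app in Hg. simpl in Hg.
  specialize (Hg ltac:(lia)).
  rewrite app_nth1 in Hg by lia.
  destruct (Nat.lt_ge_cases (S k) (length c)) as [Hs|Hs].
  - rewrite app_nth1 in Hg by lia.
    rewrite Nat.mod_small by lia. replace (k + 1)%nat with (S k) by lia.
    split; [|exact Hg]. intro He.
    apply (proj1 (NoDup_nth c d0) Hnd k (S k)) in He; lia.
  - rewrite app_nth2 in Hg by lia. replace (S k - length c)%nat with 0%nat in Hg by lia.
    replace ((k + 1) mod length c)%nat with 0%nat.
    2:{ replace (k + 1)%nat with (length c) by lia. rewrite Nat.Div0.mod_same; lia. }
    assert (Hh : hd d0 c = nth 0 c d0) by (destruct c; reflexivity).
    rewrite Hh in Hg. split; [|exact Hg]. intro He.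
    apply (proj1 (NoDup_nth c d0) Hnd k 0%nat) in He; lia.
Qed.

Lemma part_chain (P : list pt) : part_ok adj P -> P <> [] /\ chain P.
Proof.
  intros [[v ->]|[Hl Hc]].
  - split; [discriminate|exact I].
  - split; [intro; subst; simpl in Hl; lia|].
    apply nth_chain. intros k Hk. specialize (Hc k ltac:(lia)).
    rewrite Nat.mod_small in Hc by lia. replace (k + 1)%nat with (S k) in Hc by lia.
    apply Hc.
Qed.

(* [weave h Ps] threads the parts [Ps] between consecutive hubs of [h]:
   h1 P1 h2 P2 ... ; extra hubs are appended, extra parts dropped. *)
Fixpoint weave (h : list pt) (Ps : list (list pt)) : list pt :=
  match h, Ps with
  | x :: h', P :: Ps' => x :: P ++ weave h' Ps'
  | _, [] => h
  | [], _ :: _ => []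
  end.

Lemma weave_perm (h : list pt) (Ps : list (list pt)) : (length Ps <= length h)%nat ->
  Permutation (weave h Ps) (h ++ concat Ps).
Proof.
  revert Ps. induction h as [|x h IH]; intros Ps Hl; destruct Ps as [|P Ps]; simpl in *;
    try (rewrite ?app_nil_r; reflexivity); try lia.
  apply perm_skip. rewrite (IH Ps ltac:(lia)).
  apply Permutation_app_swap_app.
Qed.

Lemma weave_hd (h : list pt) (Ps : list (list pt)) : hd d0 (weave h Ps) = hd d0 h.
Proof. destruct h, Ps; reflexivity. Qed.

Lemma weave_last (h : list pt) (Ps : list (list pt)) : (length Ps < length h)%nat ->
  last (weave h Ps) d0 = last h d0.
Proof.
  revert Ps. induction h as [|x h IH]; intros Ps Hl; destruct Ps as [|P Ps]; simpl in *;
    try lia; [reflexivity|].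
  destruct h as [|y h]; simpl in Hl; [lia|].
  assert (Hne : weave (y :: h) Ps <> []) by (destruct Ps; discriminate).
  change (last ((x :: P) ++ weave (y :: h) Ps) d0 = last (y :: h) d0).
  rewrite last_app_nonnil by exact Hne. apply IH. simpl; lia.
Qed.

Definition hub_of (H U : list pt) : Prop := forall x y, In x H -> In y U -> g x y.

Lemma hub_of_incl (H U U' : list pt) : incl U U' -> hub_of H U' -> hub_of H U.
Proof. intros Hi Hh x y Hx Hy. exact (Hh x y Hx (Hi y Hy)). Qed.

(* Threading fewer parts than hubs yields a walk: each part is entered and
   left through a hub. *)
Lemma weave_chain (h : list pt) (Ps : list (list pt)) : (length Ps < length h)%nat ->
  (forall P, In P Ps -> P <> [] /\ chain P) -> hub_of h (h ++ concat Ps) ->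
  chain (weave h Ps).
Proof.
  revert Ps. induction h as [|x h IH]; intros Ps Hl HP Hh;
    destruct Ps as [|P Ps]; simpl in Hl; try lia.
  - apply chain_clique. intros a b Ha Hb. apply (Hh a b Ha). simpl. rewrite app_nil_r. exact Hb.
  - destruct h as [|y h]; simpl in Hl; [lia|].
    destruct (HP P (or_introl eq_refl)) as [HPne HPc].
    assert (Hrest : chain (weave (y :: h) Ps)).
    { apply IH; [simpl; lia|intros Q HQ; apply HP; right; exact HQ|].
      intros a b Ha Hb. apply Hh; [right; exact Ha|].
      right. rewrite in_app_iff in Hb |- *. destruct Hb as [Hb|Hb]; [left; exact Hb|].
      right. apply in_app_iff. right. exact Hb. }
    destruct P as [|p P]; [contradiction|].
    change (g x p /\ chain ((p :: P) ++ weave (y :: h) Ps)). split.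
    + apply (Hh x p (or_introl eq_refl)). right. apply in_app_iff. right. left. reflexivity.
    + apply chain_app; [exact HPc|exact Hrest|].
      right; right. rewrite weave_hd. apply g_sym.
      apply (Hh y (last (p :: P) d0) (or_intror (or_introl eq_refl))).
      right. apply in_app_iff. right. apply in_app_iff. left.
      apply last_In_nonnil. discriminate.
Qed.

Lemma hub_cycle (H : list pt) (Ps : list (list pt)) :
  NoDup (H ++ concat Ps) -> Forall (part_ok adj) Ps -> hub_of H (H ++ concat Ps) ->
  (length Ps < length H)%nat -> (3 <= length H + length (concat Ps))%nat ->
  exists c, Permutation c (H ++ concat Ps) /\ is_cycle adj c /\
    exists k, (k < length c)%nat /\ In (nth k c d0) H /\
              In (nth ((k + 1) mod length c) c d0) H.
Proof.
  intros Hnd HF Hh Hlt H3. set (c := weave H Ps).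
  assert (Hperm : Permutation c (H ++ concat Ps)) by (apply weave_perm; lia).
  assert (Hlen : (3 <= length c)%nat)
    by (rewrite (Permutation_length Hperm), length_app; exact H3).
  assert (HHne : H <> []) by (intro E; subst; simpl in Hlt; lia).
  assert (Hlast : In (last c d0) H)
    by (unfold c; rewrite weave_last by exact Hlt; apply last_In_nonnil; exact HHne).
  assert (Hhd : In (hd d0 c) H)
    by (unfold c; rewrite weave_hd; destruct H; [contradiction|left; reflexivity]).
  exists c. split; [exact Hperm|]. split.
  - apply cycle_of_closed_chain; [|exact Hlen|].
    + exact (Permutation_NoDup (Permutation_sym Hperm) Hnd).
    + apply chain_app; [| exact I |].
      * apply weave_chain; [exact Hlt| |exact Hh].
        intros P HP. apply part_chain. rewrite Forall_forall in HF. exact (HF P HP).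
      * right; right. apply (Hh _ _ Hlast). apply in_app_iff. left. exact Hhd.
  - exists (length c - 1)%nat. split; [lia|]. split.
    + rewrite <- last_nth. exact Hlast.
    + replace ((length c - 1 + 1) mod length c)%nat with 0%nat.
      * destruct c; exact Hhd.
      * replace (length c - 1 + 1)%nat with (length c) by lia.
        rewrite Nat.Div0.mod_same. reflexivity.
Qed.

Lemma cover_perm (W W' : list pt) (k : nat) :
  Permutation W W' -> covered_by adj W k -> covered_by adj W' k.
Proof.
  intros Hp [parts [H1 [H2 H3]]]. exists parts.
  split; [exact H1|split; [exact (Permutation_trans H2 Hp)|exact H3]].
Qed.

Lemma cover_app (W1 W2 : list pt) (k1 k2 : nat) :
  covered_by adj W1 k1 -> covered_by adj W2 k2 -> covered_by adj (W1 ++ W2) (k1 + k2).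
Proof.
  intros [P1 [L1 [C1 F1]]] [P2 [L2 [C2 F2]]]. exists (P1 ++ P2).
  rewrite length_app, concat_app. split; [lia|].
  split; [exact (Permutation_app C1 C2)|exact (proj2 (Forall_app _ _ _) (conj F1 F2))].
Qed.

Lemma cover_singletons (H U : list pt) (k : nat) :
  covered_by adj U k -> covered_by adj (H ++ U) (length H + k).
Proof.
  intros HU. apply cover_app; [|exact HU].
  exists (map (fun x => [x]) H). rewrite length_map. split; [reflexivity|]. split.
  - induction H as [|x H IH]; [reflexivity|]. simpl. apply perm_skip. exact IH.
  - apply Forall_map, Forall_forall. intros x _. left. exists x. reflexivity.
Qed.

(* Number of parts after merging [N] hubs into a cover with [m] parts: the hubs
   stay isolated unless there are at least two of them and three points in all;
   otherwise they absorb up to [N - 1] parts into a single cycle. *)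
Definition hub_count (N m : nat) : nat :=
  if ((N <=? 1) || (N + m <=? 2))%bool then (N + m)%nat else Nat.max (m + 2 - N) 1.

Lemma hub_merge (H U : list pt) (m : nat) :
  NoDup (H ++ U) -> hub_of H (H ++ U) -> covered_by adj U m ->
  covered_by adj (H ++ U) (hub_count (length H) m).
Proof.
  intros Hnd Hh HU. unfold hub_count.
  destruct ((length H <=? 1) || (length H + m <=? 2))%bool eqn:Hsmall;
    [exact (cover_singletons H U m HU)|].
  apply Bool.orb_false_iff in Hsmall as [HN HNm].
  apply Nat.leb_gt in HN, HNm.
  destruct HU as [Ps [Hm [HPs HF]]].
  set (t := (length H - 1)%nat).
  assert (HPU : Permutation (H ++ concat (firstn t Ps) ++ concat (skipn t Ps)) (H ++ U))
    by (rewrite <- concat_app, firstn_skipn; apply Permutation_app_head; exact HPs).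
  assert (Hnd1 : NoDup (H ++ concat (firstn t Ps))).
  { apply (NoDup_app_remove_r _ (concat (skipn t Ps))). rewrite <- app_assoc.
    exact (Permutation_NoDup (Permutation_sym HPU) Hnd). }
  assert (HF1 : Forall (part_ok adj) (firstn t Ps))
    by (rewrite <- (firstn_skipn t Ps) in HF; exact (proj1 (proj1 (Forall_app _ _ _) HF))).
  assert (HF2 : Forall (part_ok adj) (skipn t Ps))
    by (rewrite <- (firstn_skipn t Ps) in HF; exact (proj2 (proj1 (Forall_app _ _ _) HF))).
  assert (Hh1 : hub_of H (H ++ concat (firstn t Ps))).
  { apply (hub_of_incl _ _ (H ++ U)); [|exact Hh]. intros y Hy.
    apply (Permutation_in _ HPU). rewrite app_assoc. apply in_or_app. left. exact Hy. }
  assert (Hsize : (3 <= length H + length (concat (firstn t Ps)))%nat).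
  { destruct (Nat.le_gt_cases 3 (length H)) as [H3|H3]; [lia|].
    destruct Ps as [|P Ps']; simpl in Hm; [lia|].
    replace t with 1%nat by (unfold t; lia). simpl. rewrite app_nil_r.
    inversion HF as [|? ? HP _]; subst.
    destruct (part_chain P HP) as [HPne _]. destruct P; [contradiction|]. simpl. lia. }
  destruct (hub_cycle H (firstn t Ps) Hnd1 HF1 Hh1
              ltac:(rewrite length_firstn; lia) Hsize) as [c [Hc [Hcyc _]]].
  exists (c :: skipn t Ps). split.
  - simpl. rewrite length_skipn. lia.
  - split; [|constructor; [right; exact Hcyc|exact HF2]].
    simpl. rewrite app_assoc in HPU.
    exact (Permutation_trans (Permutation_app_tail _ Hc) HPU).
Qed.

Lemma hub_merge_cycle (H U : list pt) (m : nat) :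
  NoDup (H ++ U) -> hub_of H (H ++ U) -> covered_by adj U m ->
  (m < length H)%nat -> (3 <= length H)%nat ->
  exists c, Permutation c (H ++ U) /\ is_cycle adj c /\
    exists k, (k < length c)%nat /\ In (nth k c d0) H /\
              In (nth ((k + 1) mod length c) c d0) H.
Proof.
  intros Hnd Hh [Ps [Hm [HPs HF]]] Hlt H3.
  assert (HPU : Permutation (H ++ concat Ps) (H ++ U)) by (apply Permutation_app_head; exact HPs).
  destruct (hub_cycle H Ps (Permutation_NoDup (Permutation_sym HPU) Hnd) HF
              (hub_of_incl _ _ _ (fun y => Permutation_in _ HPU) Hh) ltac:(lia) ltac:(lia))
    as [c [Hc Hrest]].
  exists c. split; [exact (Permutation_trans Hc HPU)|exact Hrest].
Qed.

End HubCovers.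

Lemma ln2_pos : 0 < ln 2.
Proof. rewrite <- ln_1. apply ln_increasing; lra. Qed.

Lemma exp_le_mono (x y : R) : x <= y -> exp x <= exp y.
Proof.
  intros [Hlt|Heq]; [left; exact (exp_increasing _ _ Hlt)|right; rewrite Heq; reflexivity].
Qed.

Lemma exp_nat_ln2 (k : nat) : exp (INR k * ln 2) = 2 ^ k.
Proof.
  induction k as [|k IH]; [simpl; rewrite Rmult_0_l, exp_0; reflexivity|].
  rewrite S_INR, Rmult_plus_distr_r, Rmult_1_l, exp_plus, IH, exp_ln by lra.
  simpl. ring.
Qed.

Lemma sin_sq_le (y : R) : sin y * sin y <= y * y.
Proof.
  assert (Hpos : forall y, 0 <= y -> sin y * sin y <= y * y).
  { intros z Hz. destruct (Req_dec z 0) as [->|Hz0]; [rewrite sin_0; lra|].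
    pose proof (sin_lt_x z ltac:(lra)).
    assert (-z <= sin z).
    { destruct (Rle_dec z 1).
      - pose proof PI2_1. pose proof (sin_ge_0 z Hz ltac:(lra)). lra.
      - pose proof (SIN_bound z). lra. }
    nra. }
  destruct (Rle_dec 0 y); [auto|].
  rewrite <- (Ropp_involutive y), sin_neg.
  pose proof (Hpos (-y) ltac:(lra)). nra.
Qed.

(* 1 - cos x = 2 sin^2 (x/2) <= x^2 / 2 *)
Lemma one_minus_cos_le (x : R) : 1 - cos x <= x * x / 2.
Proof.
  replace x with (2 * (x / 2)) at 1 by field.
  rewrite cos_2a_sin. pose proof (sin_sq_le (x / 2)). nra.
Qed.

Lemma hdist_sym (p q : pt) : hdist p q = hdist q p.
Proof.
  destruct p as [r1 t1], q as [r2 t2]. unfold hdist; simpl.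
  replace (t2 - t1) with (- (t1 - t2)) by ring. rewrite cos_neg.
  f_equal. ring.
Qed.

(* arcosh c <= ln (2c), so 2c <= e^Rad forces arcosh c <= Rad. *)
Lemma arcosh_le (Rad c : R) : 1 <= c -> 2 * c <= exp Rad -> arcosh c <= Rad.
Proof.
  intros H1 H2. unfold arcosh.
  assert (Hs : sqrt (c * c - 1) <= c).
  { assert (Hq : sqrt (c * c - 1) <= sqrt (c * c)) by (apply sqrt_le_1_alt; lra).
    rewrite sqrt_square in Hq by lra. exact Hq. }
  pose proof (sqrt_pos (c * c - 1)).
  rewrite <- (ln_exp Rad).
  destruct (Rle_lt_or_eq_dec (c + sqrt (c * c - 1)) (exp Rad) ltac:(lra)) as [Hl|He].
  - left. apply ln_increasing; lra.
  - rewrite He. lra.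
Qed.

Lemma cosh_law_exp (r1 r2 C : R) :
  cosh r1 * cosh r2 - sinh r1 * sinh r2 * C =
  ((exp r1 * exp r2 + / (exp r1 * exp r2)) * (1 - C)
   + (exp r1 / exp r2 + exp r2 / exp r1) * (1 + C)) / 4.
Proof.
  unfold cosh, sinh. rewrite !exp_Ropp.
  pose proof (exp_pos r1). pose proof (exp_pos r2). field. lra.
Qed.

Lemma hdist_le_of_bounds (Rad r1 r2 t1 t2 : R) : 0 <= r1 -> 0 <= r2 ->
  exp ((r1 + r2) / 2) * Rabs (t1 - t2) <= exp (Rad / 2) ->
  4 * exp (Rabs (r1 - r2)) <= exp Rad ->
  hdist (r1, t1) (r2, t2) <= Rad.
Proof.
  intros Hr1 Hr2 Hang Hrad.
  set (a := exp r1). set (b := exp r2). set (C := cos (t1 - t2)). set (E := exp Rad).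
  assert (Ha : 1 <= a) by (pose proof (exp_ineq1_le r1); unfold a; lra).
  assert (Hb : 1 <= b) by (pose proof (exp_ineq1_le r2); unfold b; lra).
  pose proof (COS_bound (t1 - t2)) as HC. fold C in HC.
  assert (HC1 : 1 - C <= (t1 - t2) * (t1 - t2) / 2) by apply one_minus_cos_le.
  assert (Hgap : a * b * ((t1 - t2) * (t1 - t2)) <= E).
  { assert (Eab : exp ((r1 + r2) / 2) * exp ((r1 + r2) / 2) = a * b)
      by (unfold a, b; rewrite <- !exp_plus; f_equal; field).
    assert (EE : exp (Rad / 2) * exp (Rad / 2) = E)
      by (unfold E; rewrite <- exp_plus; f_equal; field).
    assert (Eabs : Rabs (t1 - t2) * Rabs (t1 - t2) = (t1 - t2) * (t1 - t2))
      by (rewrite <- Rabs_mult; apply Rabs_right; nra).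
    pose proof (exp_pos ((r1 + r2) / 2)). pose proof (Rabs_pos (t1 - t2)).
    rewrite <- Eab, <- EE, <- Eabs.
    assert (0 <= exp ((r1 + r2) / 2) * Rabs (t1 - t2)) by nra.
    replace (exp ((r1 + r2) / 2) * exp ((r1 + r2) / 2) * (Rabs (t1 - t2) * Rabs (t1 - t2)))
      with ((exp ((r1 + r2) / 2) * Rabs (t1 - t2)) * (exp ((r1 + r2) / 2) * Rabs (t1 - t2)))
      by ring.
    apply Rmult_le_compat; assumption. }
  assert (Hab_ratio : a / b <= exp (Rabs (r1 - r2))).
  { replace (a / b) with (exp (r1 - r2))
      by (unfold a, b, Rminus, Rdiv; rewrite exp_plus, exp_Ropp; reflexivity).
    apply exp_le_mono, Rle_abs. }
  assert (Hba_ratio : b / a <= exp (Rabs (r1 - r2))).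
  { replace (b / a) with (exp (r2 - r1))
      by (unfold a, b, Rminus, Rdiv; rewrite exp_plus, exp_Ropp; reflexivity).
    apply exp_le_mono. rewrite Rabs_minus_sym. apply Rle_abs. }
  assert (Hinv : / (a * b) <= a * b).
  { assert (/ (a * b) <= 1) by (rewrite <- Rinv_1; apply Rinv_le_contravar; nra). nra. }
  set (X := a * b + / (a * b)). set (Y := a / b + b / a).
  assert (Hsum2 : 2 <= Y).
  { assert (E2 : a / b + b / a - 2 = (a - b) * (a - b) / (a * b)) by (field; lra).
    assert (0 <= (a - b) * (a - b) / (a * b))
      by (apply Rmult_le_pos; [apply Rle_0_sqr|left; apply Rinv_0_lt_compat; nra]).
    unfold Y; lra. }
  assert (Hmix : Y <= X).
  { assert (E3 : a * b + / (a * b) - (a / b + b / a) = (a * a - 1) * (b * b - 1) / (a * b))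
      by (field; lra).
    assert (0 <= (a * a - 1) * (b * b - 1) / (a * b))
      by (apply Rmult_le_pos; [apply Rmult_le_pos; nra|left; apply Rinv_0_lt_compat; nra]).
    unfold X, Y; lra. }
  assert (HX : X * (1 - C) <= E).
  { apply Rle_trans with (2 * (a * b) * (1 - C)); [unfold X; apply Rmult_le_compat_r; lra|].
    apply Rle_trans with (a * b * ((t1 - t2) * (t1 - t2))); [|exact Hgap].
    replace (2 * (a * b) * (1 - C)) with (a * b * (2 * (1 - C))) by ring.
    apply Rmult_le_compat_l; nra. }
  assert (HY : Y * (1 + C) <= E).
  { apply Rle_trans with (Y * 2); [apply Rmult_le_compat_l; lra|unfold Y, E; lra]. }
  assert (Hlow : Y * (1 - C) <= X * (1 - C)) by (apply Rmult_le_compat_r; lra).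
  unfold hdist; simpl. apply arcosh_le; fold C; rewrite cosh_law_exp; fold a b E X Y; lra.
Qed.

Lemma floor_half_log (Rad : R) :
  IZR (floorR (Rad / (2 * ln 2))) * ln 2 > Rad / 2 - ln 2.
Proof.
  pose proof ln2_pos. unfold floorR.
  pose proof (base_Int_part (Rad / (2 * ln 2))) as [_ Hb].
  assert (Hy : Rad / (2 * ln 2) * ln 2 = Rad / 2) by (field; lra).
  assert (Hm : (Rad / (2 * ln 2) - 1) * ln 2 < IZR (Int_part (Rad / (2 * ln 2))) * ln 2)
    by (apply Rmult_lt_compat_r; lra).
  lra.
Qed.

Lemma level_bound (Rad : R) (i : nat) : (Z.of_nat i <= i_max Rad)%Z ->
  INR i * ln 2 < 0.45 * Rad + ln 2.
Proof.
  intros Hi. pose proof ln2_pos. unfold i_max, ceilR in Hi.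
  apply IZR_le in Hi. rewrite <- INR_IZR_INZ, opp_IZR in Hi.
  pose proof (base_Int_part (- (0.9 * Rad / (2 * ln 2)))) as [_ Hb].
  assert (Hlt : INR i < 0.9 * Rad / (2 * ln 2) + 1) by lra.
  assert (Hy : 0.9 * Rad / (2 * ln 2) * ln 2 = 0.9 * Rad / 2) by (field; lra).
  assert (INR i * ln 2 < (0.9 * Rad / (2 * ln 2) + 1) * ln 2)
    by (apply Rmult_lt_compat_r; lra).
  lra.
Qed.

Lemma n_i_exp (Rad : R) (i : nat) :
  n_i Rad i = exp ((4 - INR i + IZR (floorR (Rad / (2 * ln 2)))) * ln 2).
Proof.
  unfold n_i. rewrite powerRZ_Rpower by lra. unfold Rpower. f_equal. f_equal.
  rewrite plus_IZR, minus_IZR, <- INR_IZR_INZ. reflexivity.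
Qed.

Lemma n_i_pos (Rad : R) (i : nat) : 0 < n_i Rad i.
Proof. rewrite n_i_exp. apply exp_pos. Qed.

Lemma n_i_shift (Rad : R) (i d : nat) : n_i Rad i = n_i Rad (i + d) * 2 ^ d.
Proof.
  rewrite !n_i_exp, <- exp_nat_ln2, <- exp_plus. f_equal. rewrite plus_INR. ring.
Qed.

Lemma n_i_succ (Rad : R) (i : nat) : n_i Rad i = 2 * n_i Rad (S i).
Proof. rewrite (n_i_shift Rad i 1), Nat.add_1_r. simpl. ring. Qed.

Lemma n_i_lower (Rad : R) (i : nat) :
  exp (Rad / 2 + (3 - INR i) * ln 2) < n_i Rad i.
Proof.
  rewrite n_i_exp. apply exp_increasing. pose proof (floor_half_log Rad). lra.
Qed.

Lemma n_i_nat (Rad : R) (i : nat) : 0 <= Rad -> (Z.of_nat i <= i_max Rad)%Z ->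
  exists k : nat, n_i Rad i = INR k.
Proof.
  intros HR Hi. pose proof (level_bound Rad i Hi). pose proof (floor_half_log Rad).
  pose proof ln2_pos.
  set (e := (4 - Z.of_nat i + floorR (Rad / (2 * ln 2)))%Z).
  assert (He : (0 <= e)%Z).
  { apply le_IZR. unfold e. rewrite plus_IZR, minus_IZR, <- INR_IZR_INZ.
    apply (Rmult_le_reg_r (ln 2)); [lra|]. lra. }
  exists (2 ^ Z.to_nat e)%nat. unfold n_i. fold e.
  rewrite <- (Z2Nat.id e He) at 1. rewrite <- pow_powerRZ, pow_INR. reflexivity.
Qed.

(* Angular estimate: at level i, e^{R - i ln 2} times the sector width
   2 pi / n_i is at most e^{R/2}, because n_i > 2^{3-i} e^{R/2} and pi <= 4. *)
Lemma sector_width_bound (Rad : R) (i : nat) :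
  exp (Rad - INR i * ln 2) * (2 * PI / n_i Rad i) <= exp (Rad / 2).
Proof.
  pose proof PI_RGT_0. pose proof PI_4. pose proof (n_i_pos Rad i) as Hn.
  pose proof (n_i_lower Rad i) as Hlow.
  set (A := exp (Rad / 2 + (3 - INR i) * ln 2)) in *.
  assert (Hsplit : exp (Rad - INR i * ln 2) = A * exp (Rad / 2) / 8).
  { replace 8 with (exp (INR 3 * ln 2)) by (rewrite exp_nat_ln2; simpl; ring).
    unfold A, Rdiv. rewrite <- exp_plus, <- exp_Ropp, <- exp_plus.
    f_equal. replace (INR 3) with 3 by (simpl; lra). field. }
  assert (HA : 0 < A) by (unfold A; apply exp_pos).
  assert (Hfrac : 0 <= A / n_i Rad i <= 1).
  { split; [unfold Rdiv; apply Rmult_le_pos; [lra|left; apply Rinv_0_lt_compat; lra]|].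
    apply (Rmult_le_reg_r (n_i Rad i)); [lra|]. unfold Rdiv.
    rewrite Rmult_assoc, Rinv_l by lra. lra. }
  rewrite Hsplit.
  replace (A * exp (Rad / 2) / 8 * (2 * PI / n_i Rad i))
    with (exp (Rad / 2) * ((PI / 4) * (A / n_i Rad i))) by (field; lra).
  pose proof (exp_pos (Rad / 2)).
  assert ((PI / 4) * (A / n_i Rad i) <= 1) by nra. nra.
Qed.

(* Radial estimate: for R >= 1000, e^{0.1 R} >= 64 absorbs the radial gap. *)
Lemma radial_gap_bound (Rad : R) : 1000 <= Rad ->
  4 * exp (0.9 * Rad + INR 4 * ln 2) <= exp Rad.
Proof.
  intros HR.
  assert (H64 : 64 <= exp (0.1 * Rad)) by (pose proof (exp_ineq1_le (0.1 * Rad)); lra).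
  rewrite exp_plus, exp_nat_ln2.
  replace (exp Rad) with (exp (0.1 * Rad) * exp (0.9 * Rad))
    by (rewrite <- exp_plus; f_equal; lra).
  pose proof (exp_pos (0.9 * Rad)). simpl. nra.
Qed.

Lemma sector_close (Rad : R) (i j : nat) (p q : pt) : 1000 <= Rad ->
  (Z.of_nat i <= i_max Rad)%Z -> in_tile Rad i j p ->
  0 <= fst q < Rad -> Rad - 2 * (INR i + 1) * ln 2 <= fst q -> in_sector Rad i j q ->
  hdist p q <= Rad.
Proof.
  destruct p as [r1 t1], q as [r2 t2].
  intros HR Hi [[[Hr1 _] _] [[Hlo1 Hhi1] [Hs1 Hs1']]] [Hr2 Hhi2] Hlo2 [Hs2 Hs2'].
  simpl in *.
  pose proof ln2_pos. pose proof PI_RGT_0. pose proof (level_bound Rad i Hi).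
  pose proof (n_i_pos Rad i).
  apply hdist_le_of_bounds; [lra|lra| |].
  - assert (Hw : Rabs (t1 - t2) <= 2 * PI / n_i Rad i).
    { apply Rabs_le.
      assert (2 * PI * (INR j + 1) / n_i Rad i - 2 * PI * INR j / n_i Rad i
              = 2 * PI / n_i Rad i) by (field; lra).
      lra. }
    assert (Hrad : exp ((r1 + r2) / 2) <= exp (Rad - INR i * ln 2))
      by (apply exp_le_mono; lra).
    eapply Rle_trans; [|exact (sector_width_bound Rad i)].
    pose proof (exp_pos ((r1 + r2) / 2)). pose proof (Rabs_pos (t1 - t2)).
    apply Rmult_le_compat; lra.
  - eapply Rle_trans; [|exact (radial_gap_bound Rad HR)].
    apply Rmult_le_compat_l; [lra|]. apply exp_le_mono. apply Rabs_le. simpl. lra.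
Qed.

(* Children of sector j at level S i are sectors 2j and 2j+1 at level i. *)
Lemma INR_double (j : nat) : INR (2 * j) = 2 * INR j.
Proof. rewrite mult_INR. simpl. ring. Qed.

Lemma INR_double_succ (j : nat) : INR (2 * j + 1) = 2 * INR j + 1.
Proof. rewrite plus_INR, mult_INR. simpl. ring. Qed.

Lemma sector_bound_mono (x y n : R) : x <= y -> 0 < n -> 2 * PI * x / n <= 2 * PI * y / n.
Proof.
  intros Hxy Hn. pose proof PI_RGT_0. unfold Rdiv. apply Rmult_le_compat_r.
  - left. apply Rinv_0_lt_compat. exact Hn.
  - nra.
Qed.

Lemma sector_lo_children (Rad : R) (i j : nat) :
  2 * PI * INR j / n_i Rad (S i) = 2 * PI * INR (2 * j) / n_i Rad i.
Proof.
  rewrite (n_i_succ Rad i), INR_double. pose proof (n_i_pos Rad (S i)). field. lra.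
Qed.

Lemma sector_hi_children (Rad : R) (i j : nat) :
  2 * PI * (INR j + 1) / n_i Rad (S i) = 2 * PI * (INR (2 * j + 1) + 1) / n_i Rad i.
Proof.
  rewrite (n_i_succ Rad i), INR_double_succ. pose proof (n_i_pos Rad (S i)). field. lra.
Qed.

Lemma sector_mid_children (Rad : R) (i j : nat) :
  2 * PI * (INR (2 * j) + 1) / n_i Rad i = 2 * PI * INR (2 * j + 1) / n_i Rad i.
Proof. rewrite INR_double, INR_double_succ. reflexivity. Qed.

Lemma sector_of_child (Rad : R) (i j : nat) (q : pt) :
  in_sector Rad i (2 * j) q \/ in_sector Rad i (2 * j + 1) q -> in_sector Rad (S i) j q.
Proof.
  unfold in_sector. rewrite sector_lo_children, sector_hi_children.
  pose proof (sector_bound_mono (INR (2 * j)) (INR (2 * j + 1)) _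
                ltac:(rewrite INR_double, INR_double_succ; lra) (n_i_pos Rad i)).
  pose proof (sector_bound_mono (INR (2 * j + 1)) (INR (2 * j + 1) + 1) _
                ltac:(lra) (n_i_pos Rad i)).
  rewrite sector_mid_children. intros [[A B]|[A B]]; split; lra.
Qed.

Lemma sectors_of_children_disjoint (Rad : R) (i j : nat) (q : pt) :
  in_sector Rad i (2 * j) q -> in_sector Rad i (2 * j + 1) q -> False.
Proof. unfold in_sector. rewrite sector_mid_children. lra. Qed.

(* A tile of level <= i inside the sector (S i, j) lies inside one of the two
   child sectors: its angular interval cannot straddle the dividing ray,
   since n_{i''} = n_i 2^(i - i''). *)
Lemma tile_in_child_sector (Rad : R) (i j i'' j'' : nat) : (i'' <= i)%nat ->
  (forall q, in_tile Rad i'' j'' q -> in_sector Rad (S i) j q) ->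
  (forall q, in_tile Rad i'' j'' q -> in_sector Rad i (2 * j) q) \/
  (forall q, in_tile Rad i'' j'' q -> in_sector Rad i (2 * j + 1) q).
Proof.
  intros Hle Hs.
  set (d := (i - i'')%nat). set (K := ((2 * j + 1) * 2 ^ d)%nat).
  pose proof (n_i_pos Rad i). pose proof (n_i_pos Rad i''). pose proof PI_RGT_0.
  assert (Hd : 0 < 2 ^ d) by (apply pow_lt; lra).
  assert (HK : 2 * PI * INR K / n_i Rad i'' = 2 * PI * INR (2 * j + 1) / n_i Rad i).
  { rewrite (n_i_shift Rad i'' d). replace (i'' + d)%nat with i by (unfold d; lia).
    unfold K. rewrite mult_INR, pow_INR. replace (INR 2) with 2 by (simpl; ring).
    field. lra. }
  destruct (le_lt_dec K j'') as [HKj|HKj]; [right|left]; intros q Hq;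
    pose proof (Hs q Hq) as [A B]; destruct Hq as [_ [_ [C D]]];
    unfold in_sector in *; rewrite sector_lo_children, sector_hi_children in *; split.
  - rewrite <- HK. eapply Rle_lt_trans; [|exact C].
    apply sector_bound_mono; [apply le_INR; exact HKj|assumption].
  - exact B.
  - exact A.
  - rewrite sector_mid_children, <- HK. eapply Rle_trans; [exact D|].
    apply sector_bound_mono; [|assumption]. rewrite <- S_INR. apply le_INR. lia.
Qed.

Lemma tile_below (Rad : R) (i j : nat) (p : pt) :
  admissible Rad i j -> in_tile Rad i j p -> in_below Rad i j p.
Proof.
  intros Ha Ht. exists i, j. split; [|exact Ht].
  split; [lia|split; [exact Ha|]]. intros q [_ [_ Hq]]. exact Hq.
Qed.

Lemma below_band (Rad : R) (i j : nat) (p : pt) : in_below Rad i j p ->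
  in_disk Rad p /\ Rad - 2 * (INR i + 1) * ln 2 <= fst p /\ in_sector Rad i j p.
Proof.
  intros [i'' [j'' [[Hle [_ Hs]] Ht]]].
  pose proof (Hs p Ht). destruct Ht as [Hd [[Hlo _] _]].
  pose proof (le_INR _ _ Hle). pose proof ln2_pos.
  split; [exact Hd|split; [nra|assumption]].
Qed.

Lemma tile_from_sector (Rad : R) (i j j'' : nat) (p : pt) : in_tile Rad i j'' p ->
  (forall q, in_tile Rad i j'' q -> in_sector Rad i j q) -> in_tile Rad i j p.
Proof.
  intros Ht Hs. pose proof (Hs p Ht) as Hsec. destruct Ht as [Hd [Hband _]].
  exact (conj Hd (conj Hband Hsec)).
Qed.

Lemma below_succ_cases (Rad : R) (i j : nat) (p : pt) : in_below Rad (S i) j p ->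
  in_tile Rad (S i) j p \/ in_below Rad i (2 * j) p \/ in_below Rad i (2 * j + 1) p.
Proof.
  intros [i'' [j'' [[Hle [Had Hs]] Ht]]].
  destruct (Nat.eq_dec i'' (S i)) as [->|Hne].
  - left. exact (tile_from_sector _ _ _ _ _ Ht Hs).
  - right. destruct (tile_in_child_sector Rad i j i'' j'' ltac:(lia) Hs) as [Hc|Hc];
      [left|right]; exists i'', j''; (split; [split; [lia|split; assumption]|exact Ht]).
Qed.

Lemma below_of_child (Rad : R) (i j : nat) (p : pt) :
  in_below Rad i (2 * j) p \/ in_below Rad i (2 * j + 1) p -> in_below Rad (S i) j p.
Proof.
  intros [[i'' [j'' [[Hle [Had Hs]] Ht]]]|[i'' [j'' [[Hle [Had Hs]] Ht]]]];
    exists i'', j''; (split; [split; [lia|split; [exact Had|]]|exact Ht]);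
    intros q Hq; apply sector_of_child; [left|right]; exact (Hs q Hq).
Qed.

Lemma below_children_disjoint (Rad : R) (i j : nat) (p : pt) :
  in_below Rad i (2 * j) p -> in_below Rad i (2 * j + 1) p -> False.
Proof.
  intros H1 H2. apply (sectors_of_children_disjoint Rad i j p);
    [exact (proj2 (proj2 (below_band _ _ _ _ H1)))|exact (proj2 (proj2 (below_band _ _ _ _ H2)))].
Qed.

Lemma tile_not_below_child (Rad : R) (i j j' : nat) (p : pt) :
  in_tile Rad (S i) j p -> in_below Rad i j' p -> False.
Proof.
  intros [_ [[_ Hhi] _]] Hb. destruct (below_band _ _ _ _ Hb) as [_ [Hlo _]].
  rewrite S_INR in Hhi. lra.
Qed.

Lemma below_level0 (Rad : R) (j : nat) (p : pt) : in_below Rad 0 j p -> in_tile Rad 0 j p.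
Proof.
  intros [i'' [j'' [[Hle [_ Hs]] Ht]]].
  assert (i'' = 0%nat) by lia. subst. exact (tile_from_sector _ _ _ _ _ Ht Hs).
Qed.

(* The children of an admissible tile are admissible, since n_{S i} is an integer. *)
Lemma children_admissible (Rad : R) (i j : nat) : 0 <= Rad -> admissible Rad (S i) j ->
  admissible Rad i (2 * j) /\ admissible Rad i (2 * j + 1).
Proof.
  intros HR [Hi Hj].
  destruct (n_i_nat Rad (S i) HR Hi) as [k Hk].
  rewrite Hk in Hj. apply INR_lt in Hj.
  assert (Hn : n_i Rad i = INR (2 * k)) by (rewrite n_i_succ, Hk, mult_INR; simpl; ring).
  split; split; try lia; rewrite Hn; apply lt_INR; lia.
Qed.

Lemma tile_hub (Rad : R) (i j : nat) (p q : pt) : 1000 <= Rad -> admissible Rad i j ->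
  in_tile Rad i j p -> in_below Rad i j q -> hdist p q <= Rad.
Proof.
  intros HR [Hi _] Hp Hq. destruct (below_band _ _ _ _ Hq) as [[Hd _] [Hlo Hs]].
  exact (sector_close Rad i j p q HR Hi Hp Hd Hlo Hs).
Qed.

Lemma in_tile_b_iff (Rad : R) (i j : nat) (p : pt) :
  in_tile_b Rad i j p = true <-> in_tile Rad i j p.
Proof.
  assert (Hle : forall x y, Defs.leb x y = true <-> x <= y)
    by (intros x y; unfold Defs.leb; destruct (Rle_dec x y); split; easy).
  assert (Hlt : forall x y, Defs.ltb x y = true <-> x < y)
    by (intros x y; unfold Defs.ltb; destruct (Rlt_dec x y); split; easy).
  assert (Heq : forall x y, eqbR x y = true <-> x = y)
    by (intros x y; unfold eqbR; destruct (Req_EM_T x y); split; easy).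
  unfold in_tile_b, in_tile, in_disk, in_sector.
  rewrite !Bool.andb_true_iff, Bool.implb_true_iff, !Hle, !Hlt, !Heq.
  tauto.
Qed.

(* N(T_{i,j}) can be counted inside W, which contains all points of V in T_{i,j}. *)
Lemma Ncount_in_W (Rad : R) (V : list pt) (i j : nat) (W : list pt) :
  NoDup V -> admissible Rad i j -> W_below Rad V i j W ->
  Ncount Rad V i j = Z.of_nat (length (filter (in_tile_b Rad i j) W)).
Proof.
  intros HV Ha [Hnd Hin]. unfold Ncount. f_equal. apply Permutation_length.
  apply NoDup_Permutation; [apply NoDup_filter; exact HV|apply NoDup_filter; exact Hnd|].
  intros x. rewrite !filter_In, in_tile_b_iff. split; intros [Hx Ht]; split; auto.
  - apply Hin. split; [exact Hx|]. apply tile_below; assumption.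
  - apply Hin in Hx. tauto.
Qed.

Lemma Dem_nonneg (Rad : R) (V : list pt) (i j : nat) : (0 <= Dem Rad V i j)%Z.
Proof.
  destruct i as [|i]; simpl; [|lia].
  destruct (_ || _)%bool; unfold Ncount; lia.
Qed.

(* Counting: the merged cover respects the demand, both at level 0 (where no
   parts come from below) and at higher levels (where the children's covers
   have at most D_{i-1,2j} + D_{i-1,2j+1} + 2 parts). *)
Lemma hub_count_level0 (N : nat) :
  (Z.of_nat (hub_count N 0) <=
   (if orb (Z.of_nat N =? 1)%Z (Z.of_nat N =? 2)%Z then Z.of_nat N else 0) + 1)%Z.
Proof.
  unfold hub_count.
  destruct (Nat.leb_spec N 1), (Nat.leb_spec (N + 0) 2),
    (Z.eqb_spec (Z.of_nat N) 1), (Z.eqb_spec (Z.of_nat N) 2); cbn [orb]; lia.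
Qed.

Lemma hub_count_step (N m : nat) (d : Z) : (0 <= d)%Z -> (Z.of_nat m <= d + 2)%Z ->
  (Z.of_nat (hub_count N m) <= Z.max (d + 3 - Z.of_nat N) 0 + 1)%Z.
Proof.
  intros Hd Hm. unfold hub_count.
  destruct (Nat.leb_spec N 1); destruct (Nat.leb_spec (N + m) 2); cbn [orb]; lia.
Qed.

Definition cover_within_demand (Rad : R) (V : list pt) (i j : nat) (W : list pt) : Prop :=
  exists k : nat, (Z.of_nat k <= Dem Rad V i j + 1)%Z /\ covered_by (adjG Rad) W k.

Definition cycle_through_tile (Rad : R) (V : list pt) (i j : nat) (W : list pt) : Prop :=
  (0 < i)%nat -> Dem Rad V i j = 0%Z ->
  exists c : list pt,
    Permutation c W /\ is_cycle (adjG Rad) c /\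
    exists k, (k < length c)%nat /\
      in_tile Rad i j (nth k c (0, 0)) /\
      in_tile Rad i j (nth ((k + 1) mod length c) c (0, 0)).

Lemma close_sym (Rad : R) (p q : pt) : hdist p q <= Rad -> hdist q p <= Rad.
Proof. rewrite hdist_sym. auto. Qed.

Lemma tile_points_hub (Rad : R) (V : list pt) (i j : nat) (W U : list pt) :
  1000 <= Rad -> admissible Rad i j -> W_below Rad V i j W -> incl U W ->
  hub_of (fun p q => hdist p q <= Rad) (filter (in_tile_b Rad i j) W) U.
Proof.
  intros HR Ha [_ Hin] HU x y Hx Hy.
  apply filter_In in Hx as [_ Hx]. apply in_tile_b_iff in Hx.
  apply (tile_hub Rad i j x y HR Ha Hx). exact (proj2 (proj1 (Hin y) (HU y Hy))).
Qed.

Lemma below_succ_split (Rad : R) (V : list pt) (i j : nat) (W : list pt) :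
  W_below Rad V (S i) j W ->
  exists Wa Wb, W_below Rad V i (2 * j) Wa /\ W_below Rad V i (2 * j + 1) Wb /\
    Permutation (filter (in_tile_b Rad (S i) j) W ++ Wa ++ Wb) W.
Proof.
  intros [Hnd Hin].
  set (sel := fun (P : pt -> Prop) p =>
                if excluded_middle_informative (P p) then true else false).
  assert (Hsel : forall P p, sel P p = true <-> P p)
    by (intros P p; unfold sel; destruct (excluded_middle_informative (P p)); split; easy).
  set (Wa := filter (sel (in_below Rad i (2 * j))) W).
  set (Wb := filter (sel (in_below Rad i (2 * j + 1))) W).
  assert (Hchild : forall j', (j' = 2 * j \/ j' = 2 * j + 1)%nat ->
            W_below Rad V i j' (filter (sel (in_below Rad i j')) W)).
  { intros j' Hj'. split; [apply NoDup_filter; exact Hnd|]. intros p.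
    rewrite filter_In, Hsel, Hin. split; [tauto|]. intros [Hp Hb]. split; [|exact Hb].
    split; [exact Hp|]. apply below_of_child. destruct Hj' as [->| ->]; auto. }
  exists Wa, Wb. split; [exact (Hchild _ (or_introl eq_refl))|].
  split; [exact (Hchild _ (or_intror eq_refl))|].
  apply NoDup_Permutation; [|exact Hnd|].
  - apply NoDup_app; [apply NoDup_filter; exact Hnd| |].
    + apply NoDup_app; [apply NoDup_filter; exact Hnd|apply NoDup_filter; exact Hnd|].
      intros p Ha Hb. unfold Wa, Wb in *. rewrite filter_In, Hsel in Ha, Hb.
      exact (below_children_disjoint Rad i j p (proj2 Ha) (proj2 Hb)).
    + intros p Ht Hab. rewrite filter_In, in_tile_b_iff in Ht.
      unfold Wa, Wb in Hab. rewrite in_app_iff, !filter_In, !Hsel in Hab.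
      destruct Hab as [[_ Hb]|[_ Hb]]; exact (tile_not_below_child _ _ _ _ _ (proj2 Ht) Hb).
  - intros p. unfold Wa, Wb. rewrite !in_app_iff, !filter_In, !Hsel, in_tile_b_iff.
    split; [intros [[Hp _]|[[Hp _]|[Hp _]]]; exact Hp|].
    intros Hp. destruct (below_succ_cases _ _ _ _ (proj2 (proj1 (Hin p) Hp))) as [H|[H|H]];
      tauto.
Qed.

Lemma level0_cover (Rad : R) (V : list pt) (j : nat) (W : list pt) : 1000 <= Rad ->
  NoDup V -> admissible Rad 0 j -> W_below Rad V 0 j W -> cover_within_demand Rad V 0 j W.
Proof.
  intros HR HV Ha HW.
  pose proof (Ncount_in_W Rad V 0 j W HV Ha HW) as HN.
  assert (Hall : filter (in_tile_b Rad 0 j) W = W).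
  { apply forallb_filter_id, forallb_forall. intros x Hx. apply in_tile_b_iff, below_level0.
    exact (proj2 (proj1 (proj2 HW x) Hx)). }
  rewrite Hall in HN.
  assert (Hhub := tile_points_hub Rad V 0 j W (W ++ []) HR Ha HW
                    ltac:(rewrite app_nil_r; apply incl_refl)).
  rewrite Hall in Hhub.
  assert (Hempty : covered_by (adjG Rad) [] 0) by (exists []; repeat split; constructor).
  pose proof (hub_merge _ (close_sym Rad) W [] 0
                ltac:(rewrite app_nil_r; exact (proj1 HW)) Hhub Hempty) as Hcov.
  rewrite app_nil_r in Hcov.
  exists (hub_count (length W) 0). split; [|exact Hcov].
  simpl Dem. rewrite HN. apply hub_count_level0.
Qed.

Lemma succ_level (Rad : R) (V : list pt) (i j : nat) (W : list pt) : 1000 <= Rad ->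
  NoDup V -> admissible Rad (S i) j -> W_below Rad V (S i) j W ->
  (forall j' W', admissible Rad i j' -> W_below Rad V i j' W' ->
                 cover_within_demand Rad V i j' W') ->
  cover_within_demand Rad V (S i) j W /\ cycle_through_tile Rad V (S i) j W.
Proof.
  intros HR HV Ha HW IH.
  pose proof (Ncount_in_W Rad V (S i) j W HV Ha HW) as HN.
  destruct (children_admissible Rad i j ltac:(lra) Ha) as [Ha0 Ha1].
  destruct (below_succ_split Rad V i j W HW) as [Wa [Wb [HWa [HWb Hperm]]]].
  destruct (IH _ _ Ha0 HWa) as [ka [Hka Hca]].
  destruct (IH _ _ Ha1 HWb) as [kb [Hkb Hcb]].
  set (T := filter (in_tile_b Rad (S i) j) W) in *.
  assert (Hnd : NoDup (T ++ Wa ++ Wb))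
    by exact (Permutation_NoDup (Permutation_sym Hperm) (proj1 HW)).
  assert (Hhub := tile_points_hub Rad V (S i) j W (T ++ Wa ++ Wb) HR Ha HW
                    (fun y => Permutation_in y Hperm)).
  pose proof (cover_app _ _ _ _ _ Hca Hcb) as Hcab.
  pose proof (Dem_nonneg Rad V i (2 * j)). pose proof (Dem_nonneg Rad V i (2 * j + 1)).
  assert (HD : Dem Rad V (S i) j = Z.max (Dem Rad V i (2 * j) + Dem Rad V i (2 * j + 1) + 3
                                          - Z.of_nat (length T)) 0)
    by (simpl Dem; rewrite HN; reflexivity).
  split.
  - exists (hub_count (length T) (ka + kb)). split.
    + rewrite HD. apply hub_count_step; lia.
    + exact (cover_perm _ _ _ _ Hperm (hub_merge _ (close_sym Rad) _ _ _ Hnd Hhub Hcab)).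
  - intros _ HD0.
    destruct (hub_merge_cycle _ (close_sym Rad) _ _ _ Hnd Hhub Hcab ltac:(lia) ltac:(lia))
      as [c [Hc [Hcyc [k [Hk [Hx Hy]]]]]].
    exists c. split; [exact (Permutation_trans Hc Hperm)|]. split; [exact Hcyc|].
    exists k. split; [exact Hk|].
    unfold T in Hx, Hy. rewrite filter_In, in_tile_b_iff in Hx, Hy.
    split; [exact (proj2 Hx)|exact (proj2 Hy)].
Qed.

Theorem mainTheorem9 :
  exists R0 : R, forall Rad : R, R0 <= Rad ->
  forall V : list pt, NoDup V -> Forall (in_disk Rad) V ->
  forall i j : nat, admissible Rad i j ->
  forall W : list pt, W_below Rad V i j W ->
    (exists k : nat, (Z.of_nat k <= Dem Rad V i j + 1)%Z /\ covered_by (adjG Rad) W k) /\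
    ((0 < i)%nat -> Dem Rad V i j = 0%Z ->
       exists c : list pt,
         Permutation c W /\ is_cycle (adjG Rad) c /\
         exists k, (k < length c)%nat /\
           in_tile Rad i j (nth k c (0, 0)) /\
           in_tile Rad i j (nth ((k + 1) mod length c) c (0, 0))).
Proof.
  exists 1000. intros Rad HR V HV _ i.
  change (forall j, admissible Rad i j -> forall W, W_below Rad V i j W ->
            cover_within_demand Rad V i j W /\ cycle_through_tile Rad V i j W).
  induction i as [|i IH]; intros j Ha W HW.
  - split; [exact (level0_cover Rad V j W HR HV Ha HW)|]. intros Hlt. lia.
  - apply (succ_level Rad V i j W HR HV Ha HW).
    intros j' W' Ha' HW'. exact (proj1 (IH j' Ha' W' HW')).
Qed.
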